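(* A real symmetric tensor $S\in\mathbb{R}^{n\times n\times n}$ of order 3 belongs to $\mathrm{OW}_n(\mathbb{R})$ if and only if its slices $S_1,\dots,S_n$ pairwise commute. In particular, the set of real symmetric tensors of order 3 and size $n$ admitting an orthogonal Waring decomposition is the zero set of a system of $n^2(n-1)^2/4$ polynomial equations of degree 2 in the $\binom{n+2}{3}$ independent entries of the tensor.
   Context: For a symmetric tensor $S$ (invariant under all permutations of its three indices), its $k$-th slice is the symmetric matrix $S_k=(S_{ijk})_{1\le i,j\le n}$. Identify $S$ with the cubic form $f(x)=\sum_{i,j,k}S_{ijk}x_ix_jx_k$. $\mathrm{OW}_n(\mathbb{R})$ is the set of cubic forms $f\in\mathbb{R}[x_1,\dots,x_n]_3$ that can be written $f(x)=g(Ax)$ where $A$ is a real orthogonal matrix ($A^TA=\mathrm{Id}$) and $g=\alpha_1x_1^3+\cdots+\alpha_nx_n^3$ with $\alpha_i\in\mathbb{R}$. *)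

(* Real numbers are modelled by an arbitrary real closed
   field R : rcfType (the statement is purely algebraic). *)
From HB Require Import structures.
From mathcomp Require Import all_boot all_order all_algebra.
Set Implicit Arguments. Unset Strict Implicit. Unset Printing Implicit Defensive.
Import Order.TTheory GRing.Theory Num.Theory.
Local Open Scope ring_scope.

Definition tensor3 (R : Type) (n : nat) := 'I_n -> 'I_n -> 'I_n -> R.

(* Symmetric: invariant under all permutations of the three indices
   (the transpositions (12) and (23) generate S_3). *)
Definition sym_tensor (R : Type) (n : nat) (S : tensor3 R n) : Prop :=
  forall i j k, S i j k = S j i k /\ S i j k = S i k j.

Definition slice (R : Type) (n : nat) (S : tensor3 R n) (k : 'I_n) : 'M[R]_n :=
  \matrix_(i, j) S i j k.

Definition cubic_form (R : comNzRingType) (n : nat) (S : tensor3 R n)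
  (x : 'cV[R]_n) : R :=
  \sum_(i < n) \sum_(j < n) \sum_(k < n) S i j k * x i 0 * x j 0 * x k 0.

Definition OW (R : comNzRingType) (n : nat) (S : tensor3 R n) : Prop :=
  exists (A : 'M[R]_n) (alpha : 'I_n -> R),
    A^T *m A = 1%:M /\
    forall x : 'cV[R]_n,
      cubic_form S x = \sum_(l < n) alpha l * ((A *m x) l 0) ^+ 3.

(* - Linear algebra: a commuting family of real symmetric matrices has an
     orthonormal basis of common eigenvectors.  A common complex eigenvector
     inside a stable subspace (library's common_eigenvector) yields a real one,
     since the eigenvalues of a real symmetric matrix are real; the orthogonal
     complement of common eigenvectors is again stable, so induction applies.
   - Cubic forms: by polarization a symmetric tensor is determined by its
     cubic form, so OW_n is the set of tensors sum_l alpha_l a_l (x) a_l (x) a_l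
     with (a_l) the rows of an orthogonal matrix A (diag_tensor A alpha).
   - The slices of diag_tensor A alpha are A^T D_k A with D_k diagonal, hence
     commute.  Conversely, if the slices commute, an orthonormal common
     eigenbasis A gives A S_k = D_k A, and the symmetry of S forces
     (D_k)_ll = alpha_l A_lk, i.e. S = diag_tensor A alpha.
   - Finally, for symmetric S_k, S_l the commutator is X - X^T with
     X = S_k S_l, which reduces commutation to the upper entries. *)

From HB Require Import structures.
From mathcomp Require Import all_boot all_order all_algebra.
From mathcomp Require Import spectral complex ring lra.
Import Order.TTheory GRing.Theory Num.Theory.
Local Open Scope ring_scope.

Lemma common_eigenvector_in {C : numClosedFieldType} {n} {U : 'M[C]_n}
    {As : seq 'M[C]_n} :
  (0 < \rank U)%N -> {in As &, forall A B, comm_mx A B} ->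
  all (fun A => stablemx U A) As ->
  exists2 v : 'rV_n, (v <= U)%MS && (v != 0) & all (fun A => stablemx v A) As.
Proof.
move=> rankU commAs /allP stableU.
have [|v vN0 /allP v_stable] := @common_eigenvector _ _ [seq restrictmx U B | B <- As] rankU.
  move=> _ _ /mapP[A AAs ->] /mapP[B BAs ->].
  by rewrite /comm_mx -!conjmxM ?inE ?stablemx_row_base ?stableU // commAs.
exists (v *m row_base U).
  rewrite mulmx_free_eq0 ?row_base_free // vN0 andbT.
  by rewrite (submx_trans (submxMl _ _)) // eq_row_base.
apply/allP => B BAs; rewrite -stablemx_restrict ?stableU //.
by apply: v_stable; apply/mapP; exists B.
Qed.

Lemma trmx11 {T : Type} (X : 'M[T]_1) : X^T = X.
Proof. by apply/matrixP => i j; rewrite !ord1 mxE. Qed.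

Lemma stable_orthogonal_complement {F : fieldType} {k n} {V : 'M[F]_(k, n)}
    {A : 'M[F]_n} :
  A^T = A -> stablemx V A -> stablemx (kermx V^T) A.
Proof.
move=> symA /submxP[X VA].
by rewrite sub_kermx -mulmxA -{1}symA -trmx_mul VA trmx_mul mulmxA mulmx_ker mul0mx.
Qed.

Section RealSymmetricEigenvectors.
Context {R : rcfType}.
Local Notation C := R[i].
Local Notation toC := (real_complex R).
Local Notation ReC := (@complex.Re R).
Local Notation ImC := (@complex.Im R).

Lemma map_mx_mulmx_real (f : {additive Rcomplex R -> R})
    (fM : forall z y, f (z * toC y) = f z * y) {m n p}
    (w : 'M[C]_(m, n)) (B : 'M[R]_(n, p)) :
  map_mx f (w *m map_mx toC B) = map_mx f w *m B.
Proof.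
apply/matrixP => i j; rewrite !mxE raddf_sum.
by apply: eq_bigr => k _; rewrite !mxE fM.
Qed.

Lemma Re_mulmx {m n p} (w : 'M[C]_(m, n)) (B : 'M[R]_(n, p)) :
  map_mx ReC (w *m map_mx toC B) = map_mx ReC w *m B.
Proof. by apply: (map_mx_mulmx_real ReC) => -[a b] y; simpc. Qed.

Lemma Im_mulmx {m n p} (w : 'M[C]_(m, n)) (B : 'M[R]_(n, p)) :
  map_mx ImC (w *m map_mx toC B) = map_mx ImC w *m B.
Proof. by apply: (map_mx_mulmx_real ImC) => -[a b] y; simpc. Qed.

Lemma complex_parts_neq0 {m n} {w : 'M[C]_(m, n)} :
  w != 0 -> (map_mx ReC w != 0) || (map_mx ImC w != 0).
Proof.
apply: contraNT; rewrite negb_or !negbK => /andP[/eqP/matrixP Re0 /eqP/matrixP Im0].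
apply/eqP/matrixP => i j; move: (Re0 i j) (Im0 i j); rewrite !mxE.
by case: (w i j) => a b /= -> ->.
Qed.

Lemma sqnorm_ge0 {n} (x : 'rV[R]_n) : 0 <= (x *m x^T) 0 0.
Proof. by rewrite mxE sumr_ge0 // => i _; rewrite mxE -expr2 sqr_ge0. Qed.

Lemma sqnorm_gt0 {n} {x : 'rV[R]_n} : x != 0 -> 0 < (x *m x^T) 0 0.
Proof.
move=> xN0; rewrite lt_def sqnorm_ge0 andbT; apply: contraNneq xN0 => x0.
have sum_sq0 : \sum_i x 0 i ^+ 2 = 0.
  by rewrite -[RHS]x0 mxE; apply: eq_bigr => i _; rewrite mxE expr2.
apply/eqP/matrixP => i j; rewrite ord1 mxE; apply/eqP; rewrite -sqrf_eq0.
by rewrite (psumr_eq0P (fun i _ => sqr_ge0 (x 0 i)) sum_sq0).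
Qed.

Lemma rescale_unit {n} {x : 'rV[R]_n} :
  x != 0 -> exists c : R, (c *: x) *m (c *: x)^T = 1%:M.
Proof.
move=> xN0; have q_gt0 := sqnorm_gt0 xN0.
exists (Num.sqrt ((x *m x^T) 0 0))^-1; apply/matrixP => i j; rewrite !ord1.
rewrite linearZ /= -scalemxAl -scalemxAr scalerA mxE [RHS]mxE -expr2 exprVn.
by rewrite sqr_sqrtr ?(ltW q_gt0) // mulVf // gt_eqF.
Qed.

Lemma symmetric_eigenvector_parts {n} {A : 'M[R]_n} {w : 'rV[C]_n} {c : C} :
  A^T = A -> w != 0 -> w *m map_mx toC A = c *: w ->
  map_mx ReC w *m A = ReC c *: map_mx ReC w /\
  map_mx ImC w *m A = ReC c *: map_mx ImC w.
Proof.
move=> symA wN0 wA; set u := map_mx ReC w; set t := map_mx ImC w.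
have uA : u *m A = ReC c *: u - ImC c *: t.
  rewrite -Re_mulmx wA; apply/matrixP => i j; rewrite !mxE.
  by move: (c) (w i j) => [a b] [x y]; simpc.
have tA : t *m A = ReC c *: t + ImC c *: u.
  rewrite -Im_mulmx wA; apply/matrixP => i j; rewrite !mxE.
  by move: (c) (w i j) => [a b] [x y]; simpc.
have A_sym_form : (u *m A) *m t^T = (t *m A) *m u^T.
  by rewrite -[RHS]trmx11 !trmx_mul trmxK symA mulmxA.
have ut : u *m t^T = t *m u^T by rewrite -[RHS]trmx11 trmx_mul trmxK.
have norm_gt0 : 0 < (u *m u^T) 0 0 + (t *m t^T) 0 0.
  case/orP: (complex_parts_neq0 wN0) => [/sqnorm_gt0 u_gt0 | /sqnorm_gt0 t_gt0].
    by rewrite ltr_wpDr ?sqnorm_ge0.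
  by rewrite ltr_wpDl ?sqnorm_ge0.
(* substituting uA and tA: Im c (|u|^2 + |t|^2) = 0 *)
have Im_c0 : ImC c = 0.
  move/matrixP/(_ 0 0): A_sym_form.
  rewrite uA tA mulmxBl mulmxDl -!scalemxAl ut.
  move: norm_gt0; move: (t *m u^T) (u *m u^T) (t *m t^T) => tu uu tt norm_gt0.
  rewrite !mxE => eq_forms.
  have : ImC c * (uu 0 0 + tt 0 0) = 0 by lra.
  by move/eqP; rewrite mulf_eq0 (gt_eqF norm_gt0) orbF => /eqP.
by move: uA tA; rewrite Im_c0 !scale0r subr0 addr0.
Qed.

Lemma real_common_eigenvector {m n} {F : 'I_m -> 'M[R]_n} {U : 'M[R]_n} :
  (forall l, (F l)^T = F l) -> (forall k l, F k *m F l = F l *m F k) ->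
  (0 < \rank U)%N -> (forall l, stablemx U (F l)) ->
  exists2 x : 'rV[R]_n, (x <= U)%MS && (x != 0) &
    forall l, exists a : R, x *m F l = a *: x.
Proof.
move=> F_sym F_comm rankU U_stable.
set FC := [seq map_mx toC (F l) | l <- enum 'I_m].
have FC_comm : {in FC &, forall A B, comm_mx A B}.
  by move=> _ _ /mapP[k _ ->] /mapP[l _ ->]; rewrite /comm_mx -!map_mxM F_comm.
have FC_stable : all (fun A => stablemx (map_mx toC U) A) FC.
  by apply/allP => _ /mapP[l _ ->]; rewrite -map_mxM map_submx U_stable.
have rankUC : (0 < \rank (map_mx toC U))%N by rewrite mxrank_map.
have [w /andP[wU wN0] /allP w_stable] := common_eigenvector_in rankUC FC_comm FC_stable.
have w_eigen l : exists c, w *m map_mx toC (F l) = c *: w.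
  by apply/sub_rVP/w_stable/map_f; rewrite mem_enum.
have [z wE] := submxP wU.
have parts_eigen l : exists a : R,
    map_mx ReC w *m F l = a *: map_mx ReC w /\ map_mx ImC w *m F l = a *: map_mx ImC w.
  have [c wc] := w_eigen l.
  by exists (ReC c); exact: symmetric_eigenvector_parts (F_sym l) wN0 wc.
case/orP: (complex_parts_neq0 wN0) => [ReN0 | ImN0].
- exists (map_mx ReC w); first by rewrite ReN0 andbT wE Re_mulmx submxMl.
  by move=> l; have [a [Re_a _]] := parts_eigen l; exists a.
- exists (map_mx ImC w); first by rewrite ImN0 andbT wE Im_mulmx submxMl.
  by move=> l; have [a [_ Im_a]] := parts_eigen l; exists a.
Qed.
End RealSymmetricEigenvectors.

Section CommonEigenbasis.
Context {R : rcfType} {m n : nat} {F : 'I_m -> 'M[R]_n}.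
Hypothesis F_sym : forall l, (F l)^T = F l.
Hypothesis F_comm : forall k l, F k *m F l = F l *m F k.

Definition common_eigenrows {k} (V : 'M[R]_(k, n)) : Prop :=
  V *m V^T = 1%:M /\ forall l, exists d : 'rV[R]_k, V *m F l = diag_mx d *m V.

(* Extension step: k < n orthonormal common eigenvectors V can be completed
   by a unit common eigenvector y in the orthogonal complement of V, which is
   stable under the family since the F l are symmetric. *)
Lemma common_eigenrows_extend {k} (V : 'M[R]_(k, n)) :
  (k < n)%N -> common_eigenrows V -> exists W : 'M[R]_(1 + k, n), common_eigenrows W.
Proof.
move=> lt_kn [VVt V_eigen].
have V_stable l : stablemx V (F l).
  by have [d ->] := V_eigen l; exact: submxMl.
have rank_compl : (0 < \rank (kermx V^T))%N.
  by rewrite mxrank_ker subn_gt0 (leq_ltn_trans (rank_leq_col _)).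
have [x /andP[x_orth xN0] x_eigen] := real_common_eigenvector F_sym F_comm rank_compl
  (fun l => stable_orthogonal_complement (F_sym l) (V_stable l)).
have xVt : x *m V^T = 0 by apply/eqP; rewrite -sub_kermx.
have [c yyt] := rescale_unit xN0; set y := c *: x.
have yVt : y *m V^T = 0 by rewrite -scalemxAl xVt scaler0.
exists (col_mx y V); split.
  rewrite tr_col_mx mul_col_row yyt yVt VVt -[V *m y^T]trmxK trmx_mul trmxK yVt.
  by rewrite trmx0 -scalar_mx_block.
move=> l; have [a xF] := x_eigen l; have [d VF] := V_eigen l.
exists (row_mx (const_mx a) d).
rewrite mul_col_mx diag_mx_row mul_block_col diag_const_mx !mul0mx addr0 add0r.
by rewrite mul_scalar_mx -VF -scalemxAl xF scalerA mulrC -scalerA.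
Qed.

Lemma common_eigenrows_exist k : (k <= n)%N -> exists V : 'M[R]_(k, n), common_eigenrows V.
Proof.
elim: k => [_ | k IHk lt_kn].
  exists 0; split; first by apply/matrixP => -[].
  by move=> l; exists 0; rewrite !flatmx0.
have [V V_eigenrows] := IHk (ltnW lt_kn).
exact: common_eigenrows_extend lt_kn V_eigenrows.
Qed.

End CommonEigenbasis.

Section CubicForms.
Context {R : comNzRingType} {n : nat}.

Definition trilinear (D : tensor3 R n) (x y z : 'cV[R]_n) : R :=
  \sum_i \sum_j \sum_k D i j k * x i 0 * y j 0 * z k 0.

Lemma cubic_formE (D : tensor3 R n) x : cubic_form D x = trilinear D x x x.
Proof. by []. Qed.

Definition diag_tensor (A : 'M[R]_n) (alpha : 'I_n -> R) : tensor3 R n :=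
  fun i j k => \sum_l alpha l * A l i * A l j * A l k.

Lemma diag_tensor_sym A alpha : sym_tensor (diag_tensor A alpha).
Proof. by move=> i j k; split; apply: eq_bigr => l _; ring. Qed.

Lemma cubic_form_diag_tensor A alpha (x : 'cV[R]_n) :
  cubic_form (diag_tensor A alpha) x = \sum_l alpha l * ((A *m x) l 0) ^+ 3.
Proof.
have cube (a : 'I_n -> R) :
    (\sum_i a i) ^+ 3 = \sum_i \sum_j \sum_k a i * a j * a k.
  rewrite exprS expr2 big_distrl /=; apply: eq_bigr => i _.
  rewrite big_distrl big_distrr /=; apply: eq_bigr => j _.
  by rewrite !big_distrr /=; apply: eq_bigr => k _; rewrite !mulrA.
have expand l : alpha l * ((A *m x) l 0) ^+ 3 = \sum_i \sum_j \sum_k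
    alpha l * A l i * A l j * A l k * x i 0 * x j 0 * x k 0.
  rewrite mxE cube big_distrr /=; apply: eq_bigr => i _.
  rewrite big_distrr /=; apply: eq_bigr => j _.
  rewrite big_distrr /=; apply: eq_bigr => k _; ring.
rewrite (eq_bigr _ (fun l _ => expand l)) /cubic_form.
rewrite [RHS]exchange_big; apply: eq_bigr => i _.
rewrite [RHS]exchange_big; apply: eq_bigr => j _.
rewrite [RHS]exchange_big; apply: eq_bigr => k _.
by rewrite !mulr_suml.
Qed.

Lemma slice_diag_tensor A alpha k :
  slice (diag_tensor A alpha) k = A^T *m diag_mx (\row_l (alpha l * A l k)) *m A.
Proof.
apply/matrixP => i j; rewrite mul_mx_diag !mxE.
by apply: eq_bigr => l _; rewrite !mxE; ring.
Qed.

Lemma trilinear_delta (D : tensor3 R n) i j k :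
  trilinear D (delta_mx i 0) (delta_mx j 0) (delta_mx k 0) = D i j k.
Proof.
have pick (f : 'I_n -> R) i0 : \sum_a f a * (delta_mx i0 0 : 'cV[R]_n) a 0 = f i0.
  rewrite (bigD1 i0) //= big1 ?addr0; first by rewrite mxE !eqxx mulr1.
  by move=> a /negbTE ai0; rewrite mxE ai0 mulr0.
rewrite /trilinear.
under eq_bigr => a _ do under eq_bigr => b _ do rewrite pick.
by under eq_bigr => a _ do rewrite pick; rewrite pick.
Qed.

(* The trilinear form is additive in each argument; for the first one this
   holds for every tensor, for the others it follows from symmetry. *)
Lemma trilinearDl (D : tensor3 R n) x x' y z :
  trilinear D (x + x') y z = trilinear D x y z + trilinear D x' y z.
Proof.
rewrite /trilinear -big_split; apply: eq_bigr => a _; rewrite -big_split.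
apply: eq_bigr => b _; rewrite -big_split; apply: eq_bigr => c _.
by rewrite mxE mulrDr !mulrDl.
Qed.

Section SymmetricTensor.
Variable D : tensor3 R n.
Hypothesis D_sym : sym_tensor D.

Lemma trilinearC12 x y z : trilinear D y x z = trilinear D x y z.
Proof.
rewrite /trilinear exchange_big; apply: eq_bigr => a _; apply: eq_bigr => b _.
by apply: eq_bigr => c _; rewrite (proj1 (D_sym b a c)); ring.
Qed.

Lemma trilinearC23 x y z : trilinear D x z y = trilinear D x y z.
Proof.
rewrite /trilinear; apply: eq_bigr => a _; rewrite exchange_big.
apply: eq_bigr => b _; apply: eq_bigr => c _.
by rewrite (proj2 (D_sym a c b)); ring.
Qed.

Lemma trilinearDm x y y' z :
  trilinear D x (y + y') z = trilinear D x y z + trilinear D x y' z.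
Proof. by rewrite -trilinearC12 trilinearDl !(trilinearC12 x). Qed.

Lemma trilinearDr x y z z' :
  trilinear D x y (z + z') = trilinear D x y z + trilinear D x y z'.
Proof. by rewrite -trilinearC23 trilinearDm !(trilinearC23 x y). Qed.

Lemma polarization x y z :
  6%:R * trilinear D x y z =
  cubic_form D (x + y + z) - cubic_form D (x + y) - cubic_form D (x + z)
  - cubic_form D (y + z) + cubic_form D x + cubic_form D y + cubic_form D z.
Proof.
rewrite !cubic_formE !trilinearDl !trilinearDm !trilinearDr.
do 3 rewrite ?(trilinearC12 x y) ?(trilinearC12 x z) ?(trilinearC12 y z)
   ?(trilinearC23 _ x y) ?(trilinearC23 _ x z) ?(trilinearC23 _ y z).
ring.
Qed.

End SymmetricTensor.
End CubicForms.

Lemma cubic_form_inj {R : numDomainType} {n} {S S' : tensor3 R n} :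
  sym_tensor S -> sym_tensor S' ->
  (forall x, cubic_form S x = cubic_form S' x) -> forall i j k, S i j k = S' i j k.
Proof.
move=> S_sym S'_sym same_form i j k.
have six_neq0 : 6%:R != 0 :> R by rewrite pnatr_eq0.
apply: (mulfI six_neq0).
by rewrite -!trilinear_delta !polarization // !same_form.
Qed.

Lemma OW_diag_tensor {R : numDomainType} {n} {S : tensor3 R n} :
  sym_tensor S -> OW S <->
  exists A alpha, A^T *m A = 1%:M /\ forall i j k, S i j k = diag_tensor A alpha i j k.
Proof.
move=> S_sym; split=> [[A [alpha [AtA S_form]]] | [A [alpha [AtA S_eq]]]].
  exists A, alpha; split=> //; apply: cubic_form_inj S_sym (diag_tensor_sym A alpha) _.
  by move=> x; rewrite S_form cubic_form_diag_tensor.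
exists A, alpha; split=> // x; rewrite -cubic_form_diag_tensor /cubic_form.
by apply: eq_bigr => i _; apply: eq_bigr => j _; apply: eq_bigr => k _; rewrite S_eq.
Qed.

Lemma slice_sym {R : Type} {n} {S : tensor3 R n} :
  sym_tensor S -> forall k, (slice S k)^T = slice S k.
Proof. by move=> S_sym k; apply/matrixP => i j; rewrite !mxE (proj1 (S_sym j i k)). Qed.

Lemma orthogonal_conj_diag_commute {R : comNzRingType} {n} (A : 'M[R]_n)
    (d e : 'rV[R]_n) :
  A *m A^T = 1%:M ->
  (A^T *m diag_mx d *m A) *m (A^T *m diag_mx e *m A) =
  (A^T *m diag_mx e *m A) *m (A^T *m diag_mx d *m A).
Proof.
move=> AAt; have conjM (X Y : 'M[R]_n) :
    A^T *m X *m A *m (A^T *m Y *m A) = A^T *m (X *m Y) *m A.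
  by rewrite !mulmxA -(mulmxA _ A) AAt mulmx1 -!mulmxA.
by rewrite !conjM diag_mxC.
Qed.

Lemma OW_slices_commute {R : numDomainType} {n} {S : tensor3 R n} :
  sym_tensor S -> OW S -> forall k l, slice S k *m slice S l = slice S l *m slice S k.
Proof.
move=> S_sym /(OW_diag_tensor S_sym)[A [alpha [AtA S_eq]]] k l.
have slice_eq k' : slice S k' = slice (diag_tensor A alpha) k'.
  by apply/matrixP => i j; rewrite !mxE S_eq.
by rewrite !slice_eq !slice_diag_tensor orthogonal_conj_diag_commute // mulmx1C.
Qed.

(* If the rows of an orthogonal A are common eigenvectors of the slices of a
   symmetric tensor, A S_k = diag(d_k) A, then the eigenvalues factor as
   d_k(l) = alpha_l A_lk with alpha_l = sum_j d_j(l) A_lj: the symmetry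
   S_ijk = S_ikj gives d_k(l) A_lj = d_j(l) A_lk, and the row a_l is a unit vector. *)
Lemma slice_eigenvalues_factor {R : comNzRingType} {n} {S : tensor3 R n}
    {A : 'M[R]_n} {d : 'I_n -> 'rV[R]_n} :
  sym_tensor S -> A *m A^T = 1%:M -> (forall k, A *m slice S k = diag_mx (d k) *m A) ->
  forall l k, d k 0 l = (\sum_j d j 0 l * A l j) * A l k.
Proof.
move=> S_sym AAt A_eigen l k.
have eigen_entry j k' : \sum_i A l i * S i j k' = d k' 0 l * A l j.
  move/matrixP/(_ l j): (A_eigen k'); rewrite mul_diag_mx !mxE => <-.
  by apply: eq_bigr => i _; rewrite mxE.
have swap j : d k 0 l * A l j = d j 0 l * A l k.
  by rewrite -!eigen_entry; apply: eq_bigr => i _; rewrite (proj2 (S_sym i j k)).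
have unit_row : \sum_j A l j * A l j = 1.
  by move/matrixP/(_ l l): AAt; rewrite !mxE eqxx mulr1n => <-; apply: eq_bigr => j _; rewrite mxE.
rewrite -[LHS]mulr1 -unit_row big_distrr big_distrl /=; apply: eq_bigr => j _.
by rewrite mulrA swap mulrAC.
Qed.

(* The main direction: a symmetric tensor with commuting slices is of the form
   diag_tensor A alpha, A being an orthonormal common eigenbasis of the slices. *)
Lemma commuting_slices_diag_tensor {R : rcfType} {n} {S : tensor3 R n} :
  sym_tensor S -> (forall k l, slice S k *m slice S l = slice S l *m slice S k) ->
  exists A alpha, A^T *m A = 1%:M /\ forall i j k, S i j k = diag_tensor A alpha i j k.
Proof.
move=> S_sym S_comm.
have [A [AAt A_eigen]] := common_eigenrows_exist (slice_sym S_sym) S_comm n (leqnn n).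
have [d d_eigen] := fin_all_exists A_eigen.
have AtA : A^T *m A = 1%:M := mulmx1C AAt.
exists A, (fun l => \sum_j d j 0 l * A l j); split=> // i j k.
have slice_conj : slice S k = A^T *m diag_mx (d k) *m A.
  by rewrite -mulmxA -d_eigen mulmxA AtA mul1mx.
move/matrixP/(_ i j): slice_conj; rewrite mul_mx_diag !mxE => ->.
apply: eq_bigr => l _; rewrite !mxE (slice_eigenvalues_factor S_sym AAt d_eigen); ring.
Qed.

Lemma OW_iff_commuting_slices {R : rcfType} {n} {S : tensor3 R n} :
  sym_tensor S -> OW S <-> forall k l, slice S k *m slice S l = slice S l *m slice S k.
Proof.
move=> S_sym; split; first exact: OW_slices_commute.
by move=> S_comm; apply/(OW_diag_tensor S_sym)/commuting_slices_diag_tensor.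
Qed.

(* For symmetric M_k, M_l the commutator is X - X^T with X = M_k M_l, so it is
   skew-symmetric with zero diagonal and antisymmetric in (k, l): a family of
   symmetric matrices commutes iff the entries i < j of the commutators with
   k < l vanish. *)
Lemma commute_iff_upper_commutator_entries {R : comNzRingType} {p n}
    (M : 'I_p -> 'M[R]_n) :
  (forall k, (M k)^T = M k) ->
  (forall k l, M k *m M l = M l *m M k) <->
  (forall (k l : 'I_p) (i j : 'I_n), (k < l)%N -> (i < j)%N ->
     (M k *m M l - M l *m M k) i j = 0).
Proof.
move=> M_sym; have MT k l : M l *m M k = (M k *m M l)^T by rewrite trmx_mul !M_sym.
have entry k l i j :
    (M k *m M l - M l *m M k) i j = (M k *m M l) i j - (M k *m M l) j i.
  by rewrite MT !mxE.
split=> [M_comm k l i j _ _ | upper k l]; first by rewrite M_comm subrr mxE.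
have sym_product (k' l' : 'I_p) (i j : 'I_n) : (k' < l')%N -> (M k' *m M l') i j = (M k' *m M l') j i.
  move=> lt_kl; case: (ltngtP i j) => [lt_ij | lt_ji | /val_inj -> //].
    by apply/eqP; rewrite -subr_eq0 -entry upper.
  by apply/esym/eqP; rewrite -subr_eq0 -entry upper.
apply/matrixP => i j; case: (ltngtP k l) => [lt_kl | lt_lk | /val_inj -> //].
  by rewrite (MT k l) [RHS]mxE; exact: sym_product.
by rewrite (MT l k) [LHS]mxE; exact/esym/sym_product.
Qed.

Theorem theorem8 (R : rcfType) (n : nat) (S : tensor3 R n) :
  sym_tensor S ->
  (OW S <-> forall k l : 'I_n, slice S k *m slice S l = slice S l *m slice S k)
  /\
  (OW S <-> forall (k l i j : 'I_n), (k < l)%N -> (i < j)%N ->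
      (slice S k *m slice S l - slice S l *m slice S k) i j = 0).
Proof.
move=> S_sym; have OW_comm := OW_iff_commuting_slices S_sym.
split=> //; apply: iff_trans OW_comm _.
exact: commute_iff_upper_commutator_entries (slice_sym S_sym).
Qed.
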